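(* For every integer $k\geq 0$ and $n=3^{k}\cdot 7$, there exists a regular $n$-tournament that is not $(n-1)$-spectrally monomorphic.
   Context: An $n$-tournament is a digraph on $n$ vertices in which every pair of distinct vertices is joined by exactly one arc. Its adjacency matrix $A=(a_{ij})$ (w.r.t. an ordering $v_1,\dots,v_n$) has $a_{ij}=1$ if $v_i$ dominates $v_j$ and $0$ otherwise. A tournament is regular if all its vertices have the same out-degree (necessarily $(n-1)/2$). A tournament is $k$-spectrally monomorphic if all the $k\times k$ principal submatrices of its adjacency matrix have the same characteristic polynomial $\det(zI-M)$. *)

From mathcomp Require Import all_boot all_order all_algebra.
Set Implicit Arguments. Unset Strict Implicit. Unset Printing Implicit Defensive.
Import GRing.Theory.
Local Open Scope ring_scope.

(* An n-tournament on vertex set 'I_n, given by its domination relation: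
   dom i j means v_i dominates v_j. *)

Definition tournament (n : nat) (dom : rel 'I_n) : Prop :=
  (forall i : 'I_n, dom i i = false) /\
  (forall i j : 'I_n, i != j -> dom i j (+) dom j i).

Definition adj (n : nat) (dom : rel 'I_n) : 'M[int]_n :=
  \matrix_(i, j) (dom i j)%:R.

Definition outdeg (n : nat) (dom : rel 'I_n) (i : 'I_n) : nat :=
  #|[set j | dom i j]|.

Definition regular_tournament (n : nat) (dom : rel 'I_n) : Prop :=
  tournament dom /\ (forall i j : 'I_n, outdeg dom i = outdeg dom j).

(* Principal submatrix of A on the index set S (rows/columns kept in the
   increasing order of S). *)
Definition principal_submx (R : Type) (n : nat) (A : 'M[R]_n)
  (S : {set 'I_n}) : 'M[R]_#|S| :=
  \matrix_(i, j) A (enum_val i) (enum_val j).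

Definition spectrally_monomorphic (k n : nat) (dom : rel 'I_n) : Prop :=
  forall S T : {set 'I_n}, #|S| = k -> #|T| = k ->
    char_poly (principal_submx (adj dom) S) =
    char_poly (principal_submx (adj dom) T).

From mathcomp Require Import all_boot all_order all_algebra.
From mathcomp Require Import perm mxtens zify.
Set Implicit Arguments. Unset Strict Implicit. Unset Printing Implicit Defensive.
Import GRing.Theory.

(* The tournament is the lexicographic product C[T] of the rotational
   tournament C on 3^k vertices with a regular 7-tournament T that is not
   doubly regular; C and T are regular, hence so is C[T].
   If a vertex u is deleted from a tournament with adjacency matrix A, the
   coefficient of z^(n-5) in the characteristic polynomial of what remains is
   (A^4)_uu plus a constant independent of u, because tr A and the diagonal
   of A^2 vanish. So (n-1)-spectral monomorphy forces every vertex to lie on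
   the same number of closed 4-walks. The powers of the adjacency matrix of
   C[T] keep the shape I (x) B^j + K (x) J, so two vertices of the same copy
   of T differ in (A^4)_uu exactly as in T, where vertices 0 and 4 lie on 14
   and 12 closed 4-walks. *)

Lemma outdegE (n : nat) (dom : rel 'I_n) i : outdeg dom i = (\sum_j dom i j)%N.
Proof.
rewrite /outdeg -sum1_card big_mkcond /=.
by apply: eq_bigr => j _; rewrite inE; case: (dom i j).
Qed.

Lemma sum_nat_interval (a b h : nat) :
  (\sum_(0 <= j < h) ((a <= j) && (j < b) : nat) = minn b h - minn a h)%N.
Proof.
elim: h => [|h IHh]; first by rewrite big_geq.
by rewrite big_nat_recr //= IHh; case: (leqP a h); case: (ltnP h b) => /=; lia.
Qed.

Section Circulant.
Variable n : nat.
Local Notation d := n./2.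

(* [i] dominates the [d] vertices following it cyclically. *)
Definition circulant : rel 'I_n :=
  fun i j => ((i < j) && (j <= i + d)) || (j + d < i).

Hypothesis n_odd : odd n.

Lemma odd_eq_double_half : n = d.*2.+1.
Proof. by rewrite -[in LHS](odd_double_half n) n_odd. Qed.

Lemma tournament_circulant : tournament circulant.
Proof.
have := odd_eq_double_half; split=> [i | [i lt_i] [j lt_j]]; rewrite /circulant /=.
  by rewrite ltnn /=; lia.
rewrite -val_eqE /= => /eqP neq_ij.
case: (ltnP i j); case: (leqP j (i + d)); case: (ltnP (j + d) i);
case: (ltnP j i); case: (leqP i (j + d)); case: (ltnP (i + d) j) => /=; lia.
Qed.

Lemma outdeg_circulant i : outdeg circulant i = d.
Proof.
pose F j := (((i < j) && (j < i + d + 1)) + ((0 <= j) && (j < i - d)))%N.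
rewrite outdegE (eq_bigr (fun j : 'I_n => F j)).
  rewrite -(big_mkord xpredT F) big_split !sum_nat_interval /=.
  by have := ltn_ord i; have := odd_eq_double_half; lia.
move=> j _; rewrite /circulant /F.
case: (ltnP i j); case: (leqP j (i + d)); case: (ltnP (j + d) i);
case: (ltnP j (i + d + 1)); case: (ltnP j (i - d)) => /=; lia.
Qed.

Lemma regular_circulant : regular_tournament circulant.
Proof. by split=> [|i j]; rewrite ?outdeg_circulant //; exact: tournament_circulant. Qed.

End Circulant.

Local Open Scope ring_scope.

Section CharPolyMinor.
Variable R : comNzRingType.

Lemma char_poly_reindex (p q : nat) (M : 'M[R]_p) (N : 'M[R]_q) (f : 'I_p -> 'I_q) :
  p = q -> injective f -> (forall i j, M i j = N (f i) (f j)) ->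
  char_poly M = char_poly N.
Proof.
move=> epq; subst q => finj eMN; pose s := perm finj; rewrite /char_poly.
have -> : char_poly_mx M = row_perm s (col_perm s (char_poly_mx N)).
  by apply/matrixP=> i j; rewrite !mxE !permE eMN (inj_eq finj).
rewrite row_permE col_permE !det_mulmx !det_perm odd_permV.
by rewrite mulrCA -signr_addb addbb expr0 mulr1.
Qed.

Lemma char_poly_principal_setC1 (n : nat) (A : 'M[R]_n) (u : 'I_n) :
  char_poly (principal_submx A [set~ u]) = char_poly (row' u (col' u A)).
Proof.
have liftP (j : 'I_n.-1) : lift u j \in [set~ u] by rewrite !inE eq_sym neq_lift.
symmetry; apply: (@char_poly_reindex _ _ _ _ (fun j => enum_rank_in (liftP j) (lift u j))).
- by rewrite cardsC1 card_ord.
- by move=> j j' /(congr1 enum_val); rewrite !enum_rankK_in //; apply: lift_inj.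
- by move=> i j; rewrite !mxE !enum_rankK_in.
Qed.

Lemma adj_char_poly_mx_diag (n : nat) (A : 'M[R]_n) (u : 'I_n) :
  \adj (char_poly_mx A) u u = char_poly (row' u (col' u A)).
Proof.
by rewrite mxE /cofactor addnn -signr_odd odd_double expr0 mul1r row'_col'_char_poly_mx.
Qed.

Definition coefmx (n : nat) (Q : 'M[{poly R}]_n) (i : nat) : 'M[R]_n :=
  \matrix_(a, b) (Q a b)`_i.

Section AdjugateCoefficients.
Variables (n : nat) (A : 'M[R]_n) (Q : 'M[{poly R}]_n) (p : {poly R}).
Hypothesis QA : Q *m char_poly_mx A = p%:M.

(* Comparing the coefficients of [z^(i+1)] in [Q (zI - A) = p I]. *)
Lemma coefmxS i : coefmx Q i = coefmx Q i.+1 *m A + (p`_i.+1)%:M.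
Proof.
apply/matrixP=> a b; move: (congr1 (fun M : 'M[{poly R}]_n => (M a b)`_i.+1) QA).
rewrite /char_poly_mx mulmxBr mul_mx_scalar !mxE coefB coefXM coef_sum coefMn /= => <-.
rewrite (eq_bigr (fun w => (Q a w * (A ^ polyC)%sesqui w b)`_i.+1)).
  by rewrite addrC subrK.
by move=> w _; rewrite !mxE coefMC.
Qed.

Lemma coefmx_eq0 : size p = n.+1 -> coefmx Q n = 0.
Proof.
move=> sz_p; pose S := (\sum_(a < n) \sum_(b < n) size (Q a b))%N.
have highQ i : (S <= i)%N -> coefmx Q i = 0.
  move=> leSi; apply/matrixP=> a b; rewrite !mxE nth_default //.
  by apply: leq_trans leSi; rewrite /S (bigD1 a) //= (bigD1 b) //= -addnA leq_addr.
have downQ e : (e <= S)%N -> coefmx Q (n + (S - e)) = 0.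
  elim: e => [|e IHe] le_eS; first by rewrite subn0 highQ // leq_addl.
  rewrite coefmxS (_ : (n + (S - e.+1)).+1 = n + (S - e))%N; last by lia.
  by rewrite IHe ?(ltnW le_eS) // mul0mx add0r nth_default ?raddf0 // sz_p; lia.
by move/(_ S (leqnn S)): downQ; rewrite subnn addn0.
Qed.

End AdjugateCoefficients.

(* The coefficient of [z^(n-5)] in [adj (zI - A)] is
   [A^4 + c_1 A^3 + c_2 A^2 + c_3 A + c_4], with [c_1 = - tr A]. *)
Lemma coef_char_poly_row'_col' (n : nat) (A : 'M[R]_n) (u : 'I_n) :
  (4 < n)%N -> (forall v, A v v = 0) -> (forall v, (A ^+ 2) v v = 0) ->
  (char_poly (row' u (col' u A)))`_(n - 5) = (A ^+ 4) u u + (char_poly A)`_(n - 4).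
Proof.
case: n A u => [|[|[|[|[|m]]]]] // A u _ A_diag A2_diag; rewrite !subSS !subn0.
set Q := \adj (char_poly_mx A).
have QA : Q *m char_poly_mx A = (char_poly A)%:M by rewrite mul_adj_mx.
have lead_cp : (char_poly A)`_m.+4.+1 = 1.
  by move/monicP: (char_poly_monic A); rewrite lead_coefE size_char_poly.
have trace_cp : (char_poly A)`_m.+4 = 0.
  by rewrite char_poly_trace // /mxtrace big1 ?oppr0.
rewrite -adj_char_poly_mx_diag -/Q.
have -> : (Q u u)`_m = coefmx Q m u u by rewrite [RHS]mxE.
do 5!rewrite (coefmxS QA); rewrite (coefmx_eq0 QA (size_char_poly A)) mul0mx add0r.
rewrite lead_cp trace_cp raddf0 addr0 mul1mx !mulmxDl !mul_scalar_mx -scalemxAl.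
have entryD (M N : 'M[R]_(m.+1.+4)) : (M + N) u u = M u u + N u u by rewrite mxE.
have entryZ c (M : 'M[R]_(m.+1.+4)) : (c *: M) u u = c * M u u by rewrite mxE.
rewrite !entryD !entryZ [(_%:M) u u]mxE eqxx mulr1n A_diag mulmxE -expr2 A2_diag !mulr0 !addr0.
by rewrite -!exprSr.
Qed.

End CharPolyMinor.

Section Tournament.
Variables (n : nat) (dom : rel 'I_n).
Hypothesis dom_tournament : tournament dom.

Lemma tournament_irr : irreflexive dom.
Proof. by case: dom_tournament. Qed.

Lemma adj_tournament_diag v : adj dom v v = 0.
Proof. by rewrite mxE tournament_irr. Qed.

Lemma adj_tournament_expr2_diag v : (adj dom ^+ 2) v v = 0.
Proof.
rewrite expr2 -mulmxE mxE big1 // => w _; rewrite !mxE.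
have [<-|neq_vw] := eqVneq v w; first by rewrite tournament_irr mul0r.
by move: (dom_tournament.2 _ _ neq_vw); case: (dom v w); case: (dom w v); rewrite ?mulr0.
Qed.

Lemma tournament_not_spectrally_monomorphic (u v : 'I_n) : (4 < n)%N ->
  (adj dom ^+ 4) u u != (adj dom ^+ 4) v v -> ~ spectrally_monomorphic n.-1 dom.
Proof.
move=> n_gt4 /eqP neq_uv SM; apply: neq_uv.
have cardC1 (w : 'I_n) : #|[set~ w]| = n.-1 by rewrite cardsC1 card_ord.
move: (SM _ _ (cardC1 u) (cardC1 v)); rewrite !char_poly_principal_setC1 => eq_cp.
move: (congr1 (fun p : {poly int} => p`_(n - 5)) eq_cp) => /=.
have coefE := coef_char_poly_row'_col' _ n_gt4 adj_tournament_diag adj_tournament_expr2_diag.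
by rewrite !coefE => /addIr.
Qed.

End Tournament.

Section LexicographicProduct.
Variables (m p : nat) (D : rel 'I_m) (E : rel 'I_p).

(* Vertex [(c, b)] of the product is [mxtens_index (c, b)], as in [*t]. *)
Definition lexprod : rel 'I_(m * p) := fun u v =>
  let: (c, b) := mxtens_unindex u in let: (c', b') := mxtens_unindex v in
  D c c' || (c == c') && E b b'.

Lemma lexprodE c b c' b' :
  lexprod (mxtens_index (c, b)) (mxtens_index (c', b')) = D c c' || (c == c') && E b b'.
Proof. by rewrite /lexprod !mxtens_indexK. Qed.

Lemma tournament_lexprod : tournament D -> tournament E -> tournament lexprod.
Proof.
move=> tD tE; split=> [u | u v].
  case: (mxtens_indexP u) => c b.
  by rewrite lexprodE (tournament_irr tD) (tournament_irr tE) andbF.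
case: (mxtens_indexP u) => c b; case: (mxtens_indexP v) => c' b' neq_uv.
rewrite !lexprodE; have [eq_cc'|neq_cc'] := eqVneq c c'.
  subst c'; rewrite (tournament_irr tD) /=; apply: tE.2.
  by apply: contra_neq neq_uv => ->.
by rewrite /= !orbF tD.2.
Qed.

Lemma outdeg_lexprod c b : irreflexive D ->
  outdeg lexprod (mxtens_index (c, b)) = (p * outdeg D c + outdeg E b)%N.
Proof.
move=> D_irr; rewrite /outdeg; set X1 := setX [set c' | D c c'] [set: 'I_p].
set X2 := setX [set c] [set b' | E b b'].
have -> : [set v | lexprod (mxtens_index (c, b)) v] = @mxtens_index m p @: (X1 :|: X2).
  apply/setP=> v; case: (mxtens_indexP v) => c' b'.
  rewrite inE lexprodE mem_imset; last exact: can_inj (@mxtens_indexK m p).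
  by rewrite !inE /= andbT eq_sym.
have disjX : X1 :&: X2 = set0.
  by apply/setP=> -[c' b']; rewrite !inE /=; case: (c' =P c) => [->|]; rewrite ?D_irr ?andbF.
rewrite card_imset; last exact: can_inj (@mxtens_indexK m p).
by rewrite cardsU disjX cards0 subn0 !cardsX cardsT cards1 card_ord mulnC mul1n.
Qed.

Lemma regular_lexprod :
  regular_tournament D -> regular_tournament E -> regular_tournament lexprod.
Proof.
move=> [tD regD] [tE regE]; split=> [|u v]; first exact: tournament_lexprod.
case: (mxtens_indexP u) => c b; case: (mxtens_indexP v) => c' b'.
by rewrite !(outdeg_lexprod _ _ (tournament_irr tD)) (regD c c') (regE b b').
Qed.

Lemma adj_lexprod : irreflexive D -> adj lexprod = adj D *t const_mx 1 + 1%:M *t adj E.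
Proof.
move=> D_irr; apply/matrixP=> u v.
case: (mxtens_indexP u) => c b; case: (mxtens_indexP v) => c' b'.
rewrite [RHS]mxE !tensmxE !mxE lexprodE mulr1.
by have [<-|neq_cc'] := eqVneq c c'; rewrite ?D_irr ?mul1r ?add0r ?mul0r ?addr0 ?orbF.
Qed.

End LexicographicProduct.

Section TensorLinearity.
Variables (R : pzRingType) (m n p q : nat).

Lemma tensmxDl (M1 M2 : 'M[R]_(m, n)) (N : 'M[R]_(p, q)) :
  (M1 + M2) *t N = M1 *t N + M2 *t N.
Proof.
apply/matrixP=> i j; case: (mxtens_indexP i) => i1 i2; case: (mxtens_indexP j) => j1 j2.
by rewrite [RHS]mxE !tensmxE mxE mulrDl.
Qed.

Lemma tensmxZl (c : R) (M : 'M[R]_(m, n)) (N : 'M[R]_(p, q)) :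
  (c *: M) *t N = c *: (M *t N).
Proof.
apply/matrixP=> i j; case: (mxtens_indexP i) => i1 i2; case: (mxtens_indexP j) => j1 j2.
by rewrite [RHS]mxE !tensmxE mxE mulrA.
Qed.

End TensorLinearity.

Lemma tensmxZr (R : comPzRingType) (m n p q : nat) (c : R)
    (M : 'M[R]_(m, n)) (N : 'M[R]_(p, q)) :
  M *t (c *: N) = c *: (M *t N).
Proof.
apply/matrixP=> i j; case: (mxtens_indexP i) => i1 i2; case: (mxtens_indexP j) => j1 j2.
by rewrite [RHS]mxE !tensmxE mxE mulrCA.
Qed.

Section LexprodPowers.
Variables (R : comNzRingType) (m p : nat) (C : 'M[R]_m) (B : 'M[R]_p) (r : R).
Local Notation J := (const_mx 1 : 'M[R]_p).
Local Notation A := (C *t J + 1%:M *t B).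
Hypotheses (BJ : B *m J = r *: J) (JB : J *m B = r *: J).

Lemma mul_const_mx1 : J *m J = p%:R *: J.
Proof.
apply/matrixP=> i j; rewrite !mxE mulr1 (eq_bigr (fun=> 1)) ?sumr_const ?card_ord //.
by move=> k _; rewrite !mxE mulr1.
Qed.

Lemma exprB_mul_const_mx1 j : B ^+ j *m J = r ^+ j *: J.
Proof.
elim: j => [|j IHj]; first by rewrite !expr0 mul1mx scale1r.
by rewrite exprS -mulmxE -mulmxA IHj -scalemxAr BJ scalerA -exprSr.
Qed.

Lemma expr_lexprod_adj j : exists K : 'M[R]_m, A ^+ j.+1 = 1%:M *t B ^+ j.+1 + K *t J.
Proof.
elim: j => [|j [K AjK]]; first by exists C; rewrite !expr1 addrC.
exists (r ^+ j.+1 *: C + p%:R *: (K *m C) + r *: K).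
rewrite exprSr AjK -mulmxE mulmxDl !mulmxDr !tensmx_mul !mul1mx !mulmx1.
have -> : B ^+ j.+1 *m B = B ^+ j.+2 by rewrite mulmxE -exprSr.
rewrite exprB_mul_const_mx1 mul_const_mx1 JB.
by rewrite !tensmxZr !tensmxDl !tensmxZl [_ + 1%:M *t _]addrC -!addrA.
Qed.

Lemma expr_lexprod_adj_diag_neq j c b b' :
  (B ^+ j.+1) b b != (B ^+ j.+1) b' b' ->
  (A ^+ j.+1) (mxtens_index (c, b)) (mxtens_index (c, b)) !=
  (A ^+ j.+1) (mxtens_index (c, b')) (mxtens_index (c, b')).
Proof.
have [K ->] := expr_lexprod_adj j.
by rewrite !mxE !mxtens_indexK /= !eqxx !mul1r !mulr1 (inj_eq (addIr _)).
Qed.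

End LexprodPowers.

Definition t7_table : seq (seq bool) :=
 [:: [:: false; false; false; false; true;  true;  true ];
     [:: true;  false; false; false; false; true;  true ];
     [:: true;  true;  false; false; true;  false; false];
     [:: true;  true;  true;  false; false; false; false];
     [:: false; true;  false; true;  false; false; true ];
     [:: false; false; true;  true;  true;  false; false];
     [:: false; false; true;  true;  false; true;  false]].

Definition t7 (i j : nat) : bool := nth false (nth [::] t7_table i) j.

Definition T7 : rel 'I_7 := fun i j => t7 i j.

Definition walks2 (i j : nat) : nat := (\sum_(0 <= k < 7) t7 i k * t7 k j)%N.
Definition walks4 (i j : nat) : nat := (\sum_(0 <= k < 7) walks2 i k * walks2 k j)%N.

Lemma t7_sums : all (fun i =>
    (\sum_(0 <= j < 7) t7 i j == 3) && (\sum_(0 <= j < 7) t7 j i == 3))%N (iota 0 7).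
Proof. by rewrite unlock; vm_compute. Qed.

Lemma walks4_diag : walks4 0 0 = 14%N /\ walks4 4 4 = 12%N.
Proof. by rewrite /walks4 /walks2 unlock; vm_compute. Qed.

Lemma T7_sums (i : 'I_7) : (\sum_(j < 7) T7 i j = 3 /\ \sum_(j < 7) T7 j i = 3)%N.
Proof.
have := allP t7_sums i; rewrite mem_iota ltn_ord => /(_ isT) /andP[/eqP row_i /eqP col_i].
by rewrite -(big_mkord xpredT (fun j => t7 i j : nat))
  -(big_mkord xpredT (fun j => t7 j i : nat)).
Qed.

Lemma tournament_T7 : tournament T7.
Proof.
split=> [[[|[|[|[|[|[|[|i]]]]]]] ?] | [[|[|[|[|[|[|[|i]]]]]]] ?] [[|[|[|[|[|[|[|j]]]]]]] ?]] //.
Qed.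

Lemma regular_T7 : regular_tournament T7.
Proof.
by split=> [|i j]; rewrite ?outdegE ?(T7_sums i).1 ?(T7_sums j).1 //; exact: tournament_T7.
Qed.

Lemma adj_T7_mul_const_mx1 : adj T7 *m const_mx 1 = 3 *: (const_mx 1 : 'M_7).
Proof.
apply/matrixP=> i j; rewrite !mxE mulr1 (eq_bigr (fun k => (T7 i k : nat)%:R)).
  by rewrite -natr_sum (T7_sums i).1.
by move=> k _; rewrite !mxE mulr1.
Qed.

Lemma const_mx1_mul_adj_T7 : (const_mx 1 : 'M_7) *m adj T7 = 3 *: const_mx 1.
Proof.
apply/matrixP=> i j; rewrite !mxE mulr1 (eq_bigr (fun k => (T7 k j : nat)%:R)).
  by rewrite -natr_sum (T7_sums j).2.
by move=> k _; rewrite !mxE mul1r.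
Qed.

Lemma adj_T7_expr4E (i j : 'I_7) : (adj T7 ^+ 4) i j = (walks4 i j)%:R.
Proof.
have expr2E (M : 'M[int]_7) i' j' : (M ^+ 2) i' j' = \sum_k M i' k * M k j'.
  by rewrite expr2 -mulmxE mxE.
rewrite -[adj T7 ^+ 4]/(adj T7 ^+ (2 * 2)) exprM expr2E /walks4 big_mkord natr_sum.
apply: eq_bigr => k _; rewrite !expr2E /walks2 !big_mkord natrM !natr_sum; congr (_ * _).
  by apply: eq_bigr => l _; rewrite !mxE natrM.
by apply: eq_bigr => l _; rewrite !mxE natrM.
Qed.

Lemma adj_T7_expr4_diag_neq :
  (adj T7 ^+ 4) 0 0 != (adj T7 ^+ 4) (inord 4) (inord 4).
Proof. by rewrite !adj_T7_expr4E inordK // (proj1 walks4_diag) (proj2 walks4_diag). Qed.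

Theorem theorem1p2 (k : nat) :
  let n := (3 ^ k * 7)%N in
  exists dom : rel 'I_n,
    regular_tournament dom /\ ~ spectrally_monomorphic n.-1 dom.
Proof.
move=> n; exists (lexprod (@circulant (3 ^ k)) T7).
have reg_circ : regular_tournament (@circulant (3 ^ k)).
  by apply: regular_circulant; rewrite oddX orbT.
have reg_prod := regular_lexprod reg_circ regular_T7.
have pos_h : (0 < 3 ^ k)%N by rewrite expn_gt0.
split=> //; pose c0 : 'I_(3 ^ k) := Ordinal pos_h.
apply: (@tournament_not_spectrally_monomorphic _ _ reg_prod.1
          (mxtens_index (c0, 0)) (mxtens_index (c0, inord 4))).
  by rewrite /n; nia.
rewrite adj_lexprod; last exact: tournament_irr reg_circ.1.
apply: expr_lexprod_adj_diag_neq adj_T7_expr4_diag_neq.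
- exact: adj_T7_mul_const_mx1.
- exact: const_mx1_mul_adj_T7.
Qed.
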